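(* $\mathfrak{b}_{\mathrm{game}^*}^{\mathrm{II}} = \mathfrak{c}$. That is, if $\mathcal{A}\subseteq\omega^\omega$ and Player II has a winning strategy in the bounding* game with respect to $\mathcal{A}$, then $|\mathcal{A}|=\mathfrak{c}$ (and such $\mathcal{A}$ of size $\mathfrak{c}$ exist).
   Context: For $\mathcal{A}\subseteq\omega^\omega$, the bounding* game with respect to $\mathcal{A}$ is the infinite two-player game in which, at round $k$, Player I plays $n_k\in\omega$ and then Player II plays $m_k\in\omega$. Player II wins iff $\langle m_k:k\in\omega\rangle\in\mathcal{A}$ and $n_k<m_k$ for infinitely many $k$. $\mathfrak{b}_{\mathrm{game}^*}^{\mathrm{II}}$ is the least $|\mathcal{A}|$ such that Player II has a winning strategy in the bounding* game with respect to $\mathcal{A}$. $\mathfrak{c}=2^{\aleph_0}$. *)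

From mathcomp Require Import all_boot.
From mathcomp Require Import boolp classical_sets cardinality.
Set Implicit Arguments. Unset Strict Implicit. Unset Printing Implicit Defensive.

Local Open Scope classical_set_scope.

(* A strategy for Player II: given the moves n_0,...,n_k of Player I so far
   (as a finite sequence), return II's answer m_k.  II's own earlier moves are
   determined by the strategy, so this is the usual notion of strategy. *)
Definition strategyII := seq nat -> nat.

Definition playII (sigma : strategyII) (f : nat -> nat) : nat -> nat :=
  fun k => sigma [seq f i | i <- iota 0 k.+1].

Definition winningII (A : set (nat -> nat)) (sigma : strategyII) : Prop :=
  forall f : nat -> nat,
    A (playII sigma f) /\
    (forall N : nat, exists k : nat, (N <= k)%N /\ (f k < playII sigma f k)%N).

Definition II_has_winning_strategy (A : set (nat -> nat)) : Prop :=
  exists sigma : strategyII, winningII A sigma.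

From mathcomp Require Import all_boot.
From mathcomp Require Import boolp classical_sets cardinality.

(* The upper bound |A| <= c is trivial, since A is a subset of omega^omega,
   which injects into 2^omega by coding a function by its graph.  The
   existence part is witnessed by A = omega^omega with the strategy "answer
   one more than I's last move".

   The content is the lower bound: if sigma is winning for II with respect
   to A, then A contains a perfect set of plays.  The key observation
   (splitting lemma) is that II's answers cannot be determined by any finite
   initial segment of I's play: otherwise I could copy II's predetermined
   answers and II would never exceed I.  Hence every position of I splits
   into two continuations on which II answers differently at some later
   round.  Iterating the splitting along a binary sequence x produces a play
   F x of I; the map x |-> playII sigma (F x) is injective from 2^omega into
   A, and Cantor-Bernstein concludes. *)

Local Open Scope classical_set_scope.
Local Open Scope card_scope.

Lemma card_le_of_inj {T U : Type} {B : set U} {f : T -> U} :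
  injective f -> (forall x, B (f x)) -> [set: T] #<= B.
Proof.
move=> f_inj fB; apply: (@card_le_trans _ _ _ (f @` [set: T])).
  have := @inj_card_eq T U [set: T] f (fun x y _ _ => @f_inj x y).
  by rewrite card_eq_sym card_eq_le => /andP[].
by apply: subset_card_le => _ [x _ <-].
Qed.

Definition graph_code (f : nat -> nat) : nat -> bool :=
  fun n => if unpickle n is Some (k, j) then f k == j else false.

Lemma graph_code_inj : injective graph_code.
Proof.
move=> f g fg; apply: funext => k.
have := congr1 (fun h => h (pickle (k, f k))) fg.
by rewrite /graph_code pickleK eqxx => /esym /eqP.
Qed.

Lemma natnat_card_eq_bool : [set: nat -> nat] #= [set: nat -> bool].
Proof.
apply: Cantor_Bernstein; first exact: card_le_of_inj graph_code_inj (fun=> I).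
have bool_to_nat_inj : injective (fun (x : nat -> bool) n => nat_of_bool (x n)).
  move=> x y xy; apply: funext => n.
  by have := congr1 (fun h => h n) xy; case: (x n); case: (y n).
exact: card_le_of_inj bool_to_nat_inj (fun=> I).
Qed.

Definition succ_strategy : strategyII := fun s => (last 0 s).+1.

Lemma succ_strategy_winning : winningII [set: nat -> nat] succ_strategy.
Proof.
move=> f; split => // N; exists N; split => //.
by rewrite /playII /succ_strategy -[N.+1]addn1 iotaD map_cat last_cat.
Qed.

Definition agree (n : nat) (f g : nat -> nat) : Prop :=
  forall i, (i < n)%N -> f i = g i.

Lemma playII_agree (sigma : strategyII) {k : nat} {f g : nat -> nat} :
  agree k.+1 f g -> playII sigma f k = playII sigma g k.
Proof.
move=> fg; rewrite /playII; congr sigma; apply/eq_in_map => i.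
by rewrite mem_iota add0n => /andP[_ /fg].
Qed.

Section PerfectSetOfPlays.
Variables (A : set (nat -> nat)) (sigma : strategyII).
Hypothesis sigma_win : winningII A sigma.

(* A position of I is a play f of which only the first n moves count.
   A splitting (g, h, k) of the position (f, n) consists of two plays
   extending it and a round k >= n where II's answers to them differ. *)
Definition splitting (p : (nat -> nat) * nat)
    (t : (nat -> nat) * (nat -> nat) * nat) : Prop :=
  [/\ agree p.2 p.1 t.1.1, agree p.2 p.1 t.1.2, (p.2 <= t.2)%N &
      playII sigma t.1.1 t.2 <> playII sigma t.1.2 t.2].

(* Every position splits: otherwise all II's answers after position (f, n)
   equal those to f, and I defeats sigma by copying them from round n on. *)
Lemma splitting_exists p : exists t, splitting p t.
Proof.
apply: contrapT; case: p => f n no_split.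
have rigid g : agree n f g -> forall k, playII sigma g k = playII sigma f k.
  move=> fg k; apply: contrapT => gf.
  have [nk|kn] := leqP n k; first by apply: no_split; exists (g, f, k).
  apply: gf; apply: playII_agree => i ik; apply/esym/fg.
  exact: leq_trans ik kn.
pose copy i := if (i < n)%N then f i else playII sigma f i.
have f_copy : agree n f copy by move=> i ilt; rewrite /copy ilt.
have [_ /(_ n) [k [nk]]] := sigma_win copy.
by rewrite rigid // /copy [(k < n)%N]ltnNge nk /= ltnn.
Qed.

Definition split_of p := proj1_sig (cid (splitting_exists p)).

Lemma split_ofP p : splitting p (split_of p).
Proof. exact: proj2_sig (cid (splitting_exists p)). Qed.

(* The child of a position in direction b: one of the two splitting plays,
   now fixed up to and including the splitting round. *)
Definition child (p : (nat -> nat) * nat) (b : bool) : (nat -> nat) * nat :=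
  (if b then (split_of p).1.1 else (split_of p).1.2, (split_of p).2.+1).

Fixpoint branch (x : nat -> bool) (i : nat) : (nat -> nat) * nat :=
  if i is j.+1 then child (branch x j) (x j) else (fun _ => 0, 0).

Lemma branch_child x i : ((branch x i).2 < (branch x i.+1).2)%N /\
  agree (branch x i).2 (branch x i).1 (branch x i.+1).1.
Proof.
have [fg fh le _] := split_ofP (branch x i).
by split; rewrite /= ?ltnS //; case: (x i).
Qed.

Lemma branch_length x i : (i <= (branch x i).2)%N.
Proof.
elim: i => //= i IH; have [lt _] := branch_child x i.
exact: leq_trans IH lt.
Qed.

Lemma branch_extends (x : nat -> bool) {i j : nat} : (i <= j)%N ->
  ((branch x i).2 <= (branch x j).2)%N /\
  agree (branch x i).2 (branch x i).1 (branch x j).1.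
Proof.
elim: j => [|j IH]; first by rewrite leqn0 => /eqP ->.
rewrite leq_eqVlt => /orP[/eqP -> //|]; rewrite ltnS => /IH[le ij].
have [lt j_child] := branch_child x j.
split; first exact: leq_trans le (ltnW lt).
by move=> k kl; rewrite ij // j_child //; exact: leq_trans kl le.
Qed.

Definition branch_play (x : nat -> bool) : nat -> nat :=
  fun k => (branch x k.+1).1 k.

Lemma branch_play_extends x i :
  agree (branch x i).2 (branch x i).1 (branch_play x).
Proof.
move=> k kl; rewrite /branch_play.
have [_ to_max] := branch_extends x (leq_maxl i k.+1).
have [_ from_max] := branch_extends x (leq_maxr i k.+1).
by rewrite to_max // from_max //; exact: branch_length.
Qed.

Definition branch_answers (x : nat -> bool) : nat -> nat :=
  playII sigma (branch_play x).

Lemma branch_answers_in_A x : A (branch_answers x).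
Proof. by have [] := sigma_win (branch_play x). Qed.

(* Two branches share all positions up to the first bit where they differ,
   then pass through the two sides of a splitting, so II's answers differ. *)
Lemma branch_answers_inj : injective branch_answers.
Proof.
move=> x y xy; apply: funext => n; apply: contrapT => xy_n.
have [i xy_i i_min] := @ex_minnP (fun i => x i != y i) (ex_intro _ n (introN eqP xy_n)).
have same_branch j : (j <= i)%N -> branch x j = branch y j.
  elim: j => [//|j IH] ji; rewrite /= IH ?(ltnW ji) //.
  congr child; apply: contrapT => /eqP xy_j.
  by have := i_min j xy_j; rewrite leqNgt ji.
have [_ _ _ answers_differ] := split_ofP (branch x i).
have bx := branch_play_extends x i.+1; have by_ := branch_play_extends y i.+1.
move: bx by_; rewrite /= -(same_branch i (leqnn i)) /child /= => bx by_.
have := congr1 (fun h => h (split_of (branch x i)).2) xy.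
rewrite /branch_answers -(playII_agree sigma bx) -(playII_agree sigma by_).
by move: xy_i; case: (x i); case: (y i) => //= _ /esym.
Qed.

End PerfectSetOfPlays.
Arguments branch_answers_inj {A sigma}.
Arguments branch_answers_in_A {A sigma}.

Theorem mainTheorem3 :
  (forall A : set (nat -> nat),
      II_has_winning_strategy A -> A #= [set: nat -> bool]) /\
  (exists A : set (nat -> nat),
      II_has_winning_strategy A /\ A #= [set: nat -> bool]).
Proof.
split.
  move=> A [sigma win]; apply: Cantor_Bernstein.
    by rewrite -(card_le_eqr natnat_card_eq_bool); exact: card_leT.
  exact: card_le_of_inj (branch_answers_inj win) (branch_answers_in_A win).
exists [set: nat -> nat]; split; last exact: natnat_card_eq_bool.
by exists succ_strategy; exact: succ_strategy_winning.
Qed.
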